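(* Let $G$ be a graph on at most $n$ vertices that contains no copy of the complete graph $K_5$. Then $\tilde b(G)\le 3^{n/4}$.
   Context: $\mathrm{Ind}(G)$ is the independence complex of $G$ (including the empty face), and $\tilde b(G)=\sum_{i\ge-1}\dim_{\mathbb{K}}\widetilde H_i(\mathrm{Ind}(G);\mathbb{K})$ for a fixed field $\mathbb{K}$; the empty graph has $\tilde b=1$. *)

From mathcomp Require Import all_boot all_order all_algebra.
From Stdlib Require Import Reals.
Set Implicit Arguments. Unset Strict Implicit. Unset Printing Implicit Defensive.
Import GRing.Theory.

Section IndComplex.
Variable T : finType.
Variable e : rel T.

Definition indep (A : {set T}) : bool :=
  [forall x in A, forall y in A, ~~ e x y].

(* Faces of Ind(G) with exactly k vertices (dimension k-1); faces 0 = {empty face}. *)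
Definition faces (k : nat) : {set {set T}} :=
  [set A : {set T} | indep A & #|A| == k].

Definition pos (A : {set T}) (v : T) : nat :=
  #|[set u in A | (enum_rank u < enum_rank v)%N]|.

Local Open Scope ring_scope.

(* Reduced simplicial boundary map C_{k} -> C_{k-1} (chains with k+1 -> k vertices),
   as a matrix acting on row vectors; k = 0 is the augmentation to the empty face. *)
Definition bdmx (K : fieldType) (k : nat) : 'M[K]_(#|faces k.+1|, #|faces k|) :=
  \matrix_(i, j)
    \sum_(v in (@enum_val _ (mem (faces k.+1)) i))
      (((@enum_val _ (mem (faces k)) j) == (@enum_val _ (mem (faces k.+1)) i) :\ v)%:R
        * (-1) ^+ pos (@enum_val _ (mem (faces k.+1)) i) v).

Local Close Scope ring_scope.

(* dim_K of reduced homology of Ind(G) in degree k-1 (faces with k vertices):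
   dim C - rank(outgoing boundary) - rank(incoming boundary). *)
Definition betti (K : fieldType) (k : nat) : nat :=
  (#|faces k| - (if k is k'.+1 then \rank (bdmx K k') else 0%N)
     - \rank (bdmx K k))%N.

Definition tot_betti (K : fieldType) : nat :=
  (\sum_(k < #|T|.+1) betti K k)%N.

End IndComplex.

Definition simple_graph (T : finType) (e : rel T) : Prop :=
  irreflexive e /\ symmetric e.

Definition K5_free (T : finType) (e : rel T) : Prop :=
  forall S : {set T}, #|S| = 5%N ->
    ~ (forall x y, x \in S -> y \in S -> x != y -> e x y).

(* Write b(W) for the total reduced Betti number of Ind(G[W]).  The faces through a
   vertex v form the cone over the link Ind(G[W - N[v]]), so the exact sequence of the
   pair gives b(W) <= b(W - v) + b(W - N[v]); here it is proved as rank inequalities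
   between boundary matrices.  If v is isolated, Ind(G[W]) is a cone and b(W) = 0.
   Splitting successively at the neighbours u_1, ..., u_d of a vertex v of minimum
   degree d therefore gives b(W) <= sum_i b(W - {u_1..u_(i-1)} - N[u_i]), each term on
   at most n - d - 1 vertices.  With c = 3^(1/4): for d <= 3 this is at most
   d c^(n-d-1) <= c^n; for d >= 5 the single split gives c^(n-1) + c^(n-6) <= c^n;
   for d = 4, K5-freeness yields two non-adjacent neighbours, and listing them first
   and last makes the last term lose 6 vertices: 3 c^(n-5) + c^(n-6) <= c^n. *)

From mathcomp Require Import all_boot all_order all_algebra.
From mathcomp Require Import ring zify.
Set Implicit Arguments. Unset Strict Implicit. Unset Printing Implicit Defensive.
Import GRing.Theory.

Section BoundaryCoefficients.
Variable K : fieldType.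
Variable T : finType.

Local Notation rk := (@enum_rank T).

Lemma pos_setU1 (A : {set T}) v w : v \notin A ->
  pos (v |: A) w = pos A w + (rk v < rk w).
Proof.
move=> vA; rewrite /pos.
have -> : [set u in v |: A | rk u < rk w] =
    if rk v < rk w then v |: [set u in A | rk u < rk w] else [set u in A | rk u < rk w].
  apply/setP=> u; rewrite !inE; case: (boolP (rk v < rk w)) => h; rewrite ?inE;
  by case: (eqVneq u v) => [->|]; rewrite ?h ?(negbTE h) ?(negbTE vA).
case: ifP => _; last by rewrite addn0.
by rewrite cardsU1 inE (negbTE vA) addnC.
Qed.

Lemma pos_setD1 (A : {set T}) v w : w \in A ->
  pos A v = pos (A :\ w) v + (rk w < rk v).
Proof.
move=> wA; rewrite -(setD1K wA) pos_setU1 ?setD1K ?setD11 //.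
Qed.

Lemma pos_setU1_self (A : {set T}) v : pos (v |: A) v = pos A v.
Proof.
rewrite /pos (_ : [set u in v |: A | rk u < rk v] = [set u in A | rk u < rk v]) //.
apply/setP=> u; rewrite !inE.
by case: (eqVneq u v) => [->|]; rewrite ?ltnn ?andbF.
Qed.

Lemma rk_lt_total v w : w != v -> (rk v < rk w) + (rk w < rk v) = 1.
Proof.
move=> ne; have : rk w != rk v by rewrite (inj_eq (@enum_rank_inj T)).
by case: (ltngtP (rk v) (rk w)) => // /val_inj ->; rewrite eqxx.
Qed.

Local Open Scope ring_scope.

Definition sign_at v (A : {set T}) : K := (-1) ^+ pos A v.

Definition bd_coef (A B : {set T}) : K :=
  \sum_(w in A) ((B == A :\ w)%:R * (-1) ^+ pos A w).

Lemma sign_atK v A : sign_at v A * sign_at v A = 1.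
Proof. by rewrite -expr2 sqrr_sign. Qed.

Lemma setU1_eq (v : T) (A B : {set T}) : v \notin A -> v \notin B ->
  (v |: A == v |: B) = (A == B).
Proof.
move=> vA vB; apply/eqP/eqP => [/setP H|->] //; apply/setP => x.
move: (H x); rewrite !in_setU1.
by case: (eqVneq x v) => [->|] //=; rewrite (negbTE vA) (negbTE vB).
Qed.

Lemma bd_coef_setU1 v (A B : {set T}) : v \notin A -> v \notin B ->
  bd_coef A B = - (sign_at v A * sign_at v B) * bd_coef (v |: A) (v |: B).
Proof.
move=> vA vB; rewrite /bd_coef (big_setU1 _ vA) /= setU1K //.
have -> : (v |: B == A) = false.
  by apply/negbTE; apply: contra vA => /eqP <-; rewrite setU11.
rewrite mul0r add0r mulr_sumr; apply: eq_bigr => w wA.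
have wv : w != v by apply: contraNneq vA => <-.
have -> : (v |: A) :\ w = v |: (A :\ w).
  by apply/setP => x; rewrite !inE; case: (eqVneq x v) => [->|] //=; rewrite eq_sym wv.
rewrite setU1_eq ?inE ?negb_and ?vA ?orbT //.
case: eqP => [->|_]; last by rewrite !mul0r mulr0.
rewrite /sign_at (pos_setU1 _ vA) (pos_setD1 v wA) !mul1r !exprD.
have hX : (-1) ^+ pos (A :\ w) v * (-1) ^+ pos (A :\ w) v = 1 :> K.
  by rewrite -expr2 sqrr_sign.
have hBC : (-1) ^+ (rk w < rk v) * (-1) ^+ (rk v < rk w) = -1 :> K.
  by rewrite -exprD addnC rk_lt_total // expr1.
move: hX hBC; set X := _ ^+ pos _ v; set B1 := _ ^+ (rk w < rk v); set C := _ ^+ (rk v < rk w).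
move=> hX hBC; have -> : - (X * B1 * X) * ((-1) ^+ pos A w * C) =
  - ((X * X) * (B1 * C)) * (-1) ^+ pos A w by ring.
by rewrite hX hBC; ring.
Qed.

Lemma bd_coef_cone v (A B : {set T}) : v \notin A -> v \notin B ->
  sign_at v A * bd_coef (v |: A) B = (B == A)%:R.
Proof.
move=> vA vB; rewrite /bd_coef (big_setU1 _ vA) /= setU1K // big1 ?addr0.
  by rewrite pos_setU1_self mulrCA -/(sign_at v A) sign_atK mulr1.
move=> w wA; have wv : w != v by apply: contraNneq vA => <-.
suff -> : (B == (v |: A) :\ w) = false by rewrite mul0r.
by apply/negbTE; apply: contra vB => /eqP ->; rewrite !inE eq_sym wv eqxx.
Qed.

Lemma bd_coef_absent v (A B : {set T}) : v \notin A -> v \in B -> bd_coef A B = 0.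
Proof.
move=> vA vB; rewrite /bd_coef big1 // => w _.
suff -> : (B == A :\ w) = false by rewrite mul0r.
by apply/negbTE; apply: contra vA => /eqP hB; move: vB; rewrite hB => /setD1P[].
Qed.

End BoundaryCoefficients.

Section InducedHomology.
Variable K : fieldType.
Variable T : finType.
Variable e : rel T.

Local Notation F k := (faces e k).

Definition face_of k (i : 'I_#|F k|) : {set T} := @enum_val _ (mem (F k)) i.

Lemma face_of_inj k : injective (@face_of k).
Proof. exact: enum_val_inj. Qed.

Lemma face_ofP k (i : 'I_#|F k|) : face_of i \in F k.
Proof. exact: enum_valP. Qed.

Lemma face_of_onto k (A : {set T}) : A \in F k -> exists i : 'I_#|F k|, face_of i = A.
Proof. by move=> HA; exists (enum_rank_in HA A); rewrite /face_of enum_rankK_in. Qed.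

Lemma facesE k (A : {set T}) : (A \in F k) = indep e A && (#|A| == k).
Proof. by rewrite inE. Qed.

Lemma face_indep k (A : {set T}) x y : A \in F k -> x \in A -> y \in A -> ~~ e x y.
Proof.
rewrite facesE => /andP[/forallP iA _] xA yA.
by move/implyP: (iA x) => /(_ xA) /forallP /(_ y) /implyP /(_ yA).
Qed.

Lemma faces_setD1 k (A : {set T}) v : A \in F k.+1 -> v \in A -> A :\ v \in F k.
Proof.
move=> Ak vA; have := Ak; rewrite !facesE => /andP[_ /eqP cA].
rewrite (cardsD1 v A) vA add1n in cA; case: cA => ->; rewrite eqxx andbT.
apply/forallP => x; apply/implyP => /setD1P[_ xA].
by apply/forallP => y; apply/implyP => /setD1P[_ yA]; exact: face_indep Ak xA yA.
Qed.

Lemma faces0 (A : {set T}) : (A \in F 0) = (A == set0).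
Proof.
rewrite facesE cards_eq0 andbC; case: eqP => //= ->.
by apply/forallP => x; rewrite inE.
Qed.

Local Open Scope ring_scope.

Definition face_diag (P : pred {set T}) k : 'M[K]_#|F k| :=
  diag_mx (\row_i (P (face_of i))%:R).

(* The faces of Ind(G[W]) are the faces of Ind(G) contained in W: [supp_mx W k]
   projects the k-chains onto those of Ind(G[W]), and [bd_on W k] is the boundary
   map of Ind(G[W]). *)
Definition supp_mx (W : {set T}) k := face_diag (fun A => A \subset W) k.

Definition bd_on (W : {set T}) k := supp_mx W k.+1 *m bdmx e K k *m supp_mx W k.

Local Close Scope ring_scope.

Definition dim_chains (W : {set T}) k := \rank (supp_mx W k).
Definition rank_bd (W : {set T}) k := \rank (bd_on W k).
Definition rank_bd_into (W : {set T}) k := if k is k'.+1 then rank_bd W k' else 0.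
Definition betti_on (W : {set T}) k := dim_chains W k - rank_bd_into W k - rank_bd W k.
Definition tot_betti_on (W : {set T}) := \sum_(k < #|T|.+1) betti_on W k.

Local Open Scope ring_scope.

Lemma supp_mx_setT k : supp_mx setT k = 1%:M.
Proof. by apply/matrixP=> i j; rewrite !mxE subsetT. Qed.

Lemma tot_betti_on_setT : tot_betti_on setT = tot_betti e K.
Proof.
rewrite /tot_betti_on /tot_betti; apply: eq_bigr => -[k _] _ /=.
rewrite /betti_on /betti /dim_chains /rank_bd_into /rank_bd /bd_on.
by case: k => [|k] /=; rewrite !supp_mx_setT mxrank1 ?mul1mx ?mulmx1.
Qed.

Lemma face_diagE P k (i j : 'I_#|F k|) : face_diag P k i j = ((i == j) && P (face_of i))%:R.
Proof.
by rewrite /face_diag !mxE; case: eqP => [->|]; case: (P _); rewrite ?mulr1n ?mulr0n.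
Qed.

Lemma mul_face_diag_l P k n (X : 'M[K]_(#|F k|, n)) i j :
  (face_diag P k *m X) i j = (P (face_of i))%:R * X i j.
Proof. by rewrite /face_diag mul_diag_mx !mxE. Qed.

Lemma mul_face_diag_r P k m (X : 'M[K]_(m, #|F k|)) i j :
  (X *m face_diag P k) i j = X i j * (P (face_of j))%:R.
Proof. by rewrite /face_diag mul_mx_diag !mxE. Qed.

Lemma sum_face_of_eq k (i0 : 'I_#|F k|) (g : 'I_#|F k| -> K) :
  \sum_i ((face_of i == face_of i0)%:R * g i) = g i0.
Proof.
rewrite (bigD1 i0) //= eqxx mul1r big1 ?addr0 // => i /negbTE ne.
by rewrite (inj_eq (@face_of_inj k)) ne mul0r.
Qed.

Lemma bd_onE (W : {set T}) k i j :
  bd_on W k i j =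
    (face_of i \subset W)%:R * bd_coef K (face_of i) (face_of j) * (face_of j \subset W)%:R.
Proof. by rewrite mul_face_diag_r mul_face_diag_l mxE. Qed.

Lemma supp_mx_mulS (A W : {set T}) k : A \subset W -> supp_mx A k *m supp_mx W k = supp_mx A k.
Proof.
move=> AW; apply/matrixP => i j; rewrite mul_face_diag_r !face_diagE.
case: (eqVneq i j) => [->|] /=; last by rewrite mul0r.
by case: (boolP (face_of j \subset A)) => h /=; rewrite ?mul0r // (subset_trans h AW) mulr1.
Qed.

Lemma supp_mx_mulSr (A W : {set T}) k : A \subset W -> supp_mx W k *m supp_mx A k = supp_mx A k.
Proof.
move=> AW; apply/matrixP => i j; rewrite mul_face_diag_r !face_diagE.
case: (eqVneq i j) => [->|] /=; last by rewrite mul0r.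
by case: (boolP (face_of j \subset A)) => h /=; rewrite ?mulr0 // (subset_trans h AW) mulr1.
Qed.

Lemma bd_on_restrict (A W : {set T}) k : A \subset W ->
  bd_on A k = supp_mx A k.+1 *m bd_on W k *m supp_mx A k.
Proof. by move=> AW; rewrite /bd_on !mulmxA supp_mx_mulS // -!mulmxA supp_mx_mulSr. Qed.

Lemma rank_bd_subset (A W : {set T}) k : A \subset W -> (rank_bd A k <= rank_bd W k)%N.
Proof.
move=> AW; rewrite /rank_bd (bd_on_restrict _ AW).
by apply: leq_trans (mxrankM_maxl _ _) _; exact: mxrankM_maxr.
Qed.

Lemma tot_betti_on_set0 : (tot_betti_on set0 <= 1)%N.
Proof.
rewrite /tot_betti_on big_ord_recl big1 ?addn0; last first.
  move=> i _; rewrite /betti_on /dim_chains (_ : supp_mx set0 _ = 0) ?mxrank0 //.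
  apply/matrixP => a b; rewrite face_diagE mxE subset0.
  have := face_ofP a; rewrite facesE => /andP[_ /eqP ca].
  suff -> : (face_of a == set0) = false by rewrite andbF.
  by apply/negbTE/eqP => ha; move: ca; rewrite ha cards0.
rewrite /betti_on /dim_chains; apply: leq_trans (leq_subr _ _) _.
apply: leq_trans (leq_subr _ _) _; apply: leq_trans (rank_leq_row _) _.
rewrite -(cards1 (@set0 T)); apply: subset_leq_card; apply/subsetP => A.
by rewrite faces0 inE.
Qed.

Hypothesis e_irr : irreflexive e.
Hypothesis e_sym : symmetric e.

Lemma faces_setU1 k (A : {set T}) v : A \in F k -> v \notin A ->
  {in A, forall x, ~~ e v x} -> v |: A \in F k.+1.
Proof.
move=> Ak vA hv; have := Ak; rewrite !facesE => /andP[_ /eqP cA].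
rewrite cardsU1 vA cA eqxx andbT; apply/forallP => x; apply/implyP => hx.
apply/forallP => y; apply/implyP => hy.
move: hx hy; rewrite !in_setU1 => /orP[/eqP->|xA] /orP[/eqP->|yA].
- by rewrite e_irr.
- exact: hv.
- by rewrite e_sym hv.
- exact: face_indep Ak xA yA.
Qed.

Variable v : T.

Definition cone_mx (S : {set T}) k : 'M[K]_(#|F k|, #|F k.+1|) :=
  \matrix_(i, j) (((face_of i \subset S) && (face_of j == v |: face_of i))%:R
                  * sign_at K v (face_of i)).

Lemma mul_cone_mx (S : {set T}) k m (Y : 'M[K]_(#|F k.+1|, m)) i j (r : 'I_#|F k.+1|) :
  face_of r = v |: face_of i ->
  (cone_mx S k *m Y) i j = (face_of i \subset S)%:R * sign_at K v (face_of i) * Y r j.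
Proof.
move=> hr; rewrite mxE -(sum_face_of_eq r (fun r' => _ * _ * Y r' j)).
apply: eq_bigr => r' _; rewrite mxE hr.
by case: (face_of i \subset S); case: (_ == _); rewrite /= ?mul0r ?mul1r.
Qed.

Lemma mul_cone_mx0 (S : {set T}) k m (Y : 'M[K]_(#|F k.+1|, m)) i j :
  ~~ (face_of i \subset S) -> (cone_mx S k *m Y) i j = 0.
Proof. by move=> h; rewrite mxE big1 // => r _; rewrite mxE (negbTE h) /= !mul0r. Qed.

Lemma mul_tr_cone_mx (S : {set T}) k m (Y : 'M[K]_(m, #|F k.+1|)) i j (r : 'I_#|F k.+1|) :
  face_of r = v |: face_of j ->
  (Y *m (cone_mx S k)^T) i j = Y i r * ((face_of j \subset S)%:R * sign_at K v (face_of j)).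
Proof.
move=> hr; rewrite mxE -(sum_face_of_eq r (fun r' => Y i r' * (_ * _))).
apply: eq_bigr => r' _; rewrite !mxE hr.
by case: (face_of j \subset S); case: (_ == _); rewrite /= ?mul0r ?mul1r ?mulr0.
Qed.

Lemma mul_tr_cone_mx0 (S : {set T}) k m (Y : 'M[K]_(m, #|F k.+1|)) i j :
  ~~ (face_of j \subset S) -> (Y *m (cone_mx S k)^T) i j = 0.
Proof. by move=> h; rewrite mxE big1 // => r _; rewrite !mxE (negbTE h) /= !mul0r mulr0. Qed.

Lemma notin_subsetD1 (A W : {set T}) : A \subset W :\ v -> v \notin A.
Proof. by move=> h; apply/negP => /(subsetP h); rewrite !inE eqxx. Qed.

(* When [v] is isolated in [W], [cone_mx (W :\ v)] is a contracting homotopy. *)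
Lemma dim_chains_D1_le_rank_bd (W : {set T}) k : v \in W -> {in W, forall x, ~~ e v x} ->
  (dim_chains (W :\ v) k <= rank_bd W k)%N.
Proof.
move=> vW hW; rewrite /dim_chains /rank_bd; set A := W :\ v.
have AW : A \subset W by apply: subsetDl.
suff -> : supp_mx A k = cone_mx A k *m bd_on W k *m supp_mx A k.
  by apply: leq_trans (mxrankM_maxl _ _) _; exact: mxrankM_maxr.
apply/matrixP => i j; rewrite mul_face_diag_r face_diagE.
case: (boolP (face_of i \subset A)) => hi; last by rewrite mul_cone_mx0 // mul0r andbF.
have viA := notin_subsetD1 hi.
have : v |: face_of i \in F k.+1.
  by apply: faces_setU1 (face_ofP i) viA _ => x /(subsetP hi) /(subsetP AW) /hW.
case/face_of_onto => r hr; rewrite (mul_cone_mx _ _ _ hr) hi bd_onE hr andbT.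
have -> : v |: face_of i \subset W by rewrite subUset sub1set vW (subset_trans hi AW).
case: (boolP (face_of j \subset A)) => hj; last first.
  by rewrite !mulr0; case: eqP => // ij; move: hj; rewrite -ij hi.
rewrite (subset_trans hj AW) /= !mulr1 !mul1r.
by rewrite (bd_coef_cone _ viA (notin_subsetD1 hj)) (inj_eq (@face_of_inj k)) eq_sym.
Qed.

Definition vertex_mask (W : {set T}) k := face_diag (fun A => (A \subset W) && (v \in A)) k.

Lemma supp_mx_split (W : {set T}) k : supp_mx W k = supp_mx (W :\ v) k + vertex_mask W k.
Proof.
apply/matrixP => i j; rewrite /supp_mx /vertex_mask [RHS]mxE !face_diagE subsetD1.
case: (i == j) => //=; last by rewrite addr0.
by case: (face_of i \subset W); case: (v \in face_of i); rewrite /= ?addr0 ?add0r.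
Qed.

(* The chains through [v] factor through the chains of the link [L], by deconing. *)
Lemma vertex_mask_factor (W L : {set T}) k : v \in W -> L \subset W -> v \notin L ->
  (forall A, A \in F k.+1 -> A \subset W -> v \in A -> A :\ v \subset L) ->
  vertex_mask W k.+1 = (cone_mx L k)^T *m supp_mx L k *m cone_mx L k.
Proof.
move=> vW LW vL hL; apply/matrixP => r r'; rewrite face_diagE mxE.
case: (boolP ((face_of r \subset W) && (v \in face_of r))) => [/andP[rW vr]|hn]; last first.
  rewrite andbF big1 // => t _; rewrite mul_face_diag_r !mxE.
  case: (boolP (face_of t \subset L)) => tL /=; last by rewrite !mulr0 mul0r.
  case: eqP => [hr|_] /=; last by rewrite !mul0r.
  case/negP: hn; rewrite hr in_setU1 eqxx andbT subUset sub1set vW.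
  exact: subset_trans tL LW.
have [t0 h0] := face_of_onto (faces_setD1 (face_ofP r) vr).
have t0L : face_of t0 \subset L by rewrite h0; exact: hL (face_ofP r) rW vr.
have vt0 : v \notin face_of t0 by apply: contra vL; apply: (subsetP t0L).
rewrite andbT (_ : \sum_t _ = sign_at K v (face_of t0) * cone_mx L k t0 r').
  rewrite mxE t0L /= mulrCA sign_atK mulr1 h0 setD1K //.
  by rewrite (inj_eq (@face_of_inj _)) eq_sym.
rewrite -(sum_face_of_eq t0 (fun t => sign_at K v (face_of t) * cone_mx L k t r')).
apply: eq_bigr => t _; rewrite mul_face_diag_r !mxE.
case: (eqVneq t t0) => [->|ne].
  by rewrite t0L h0 setD1K // !eqxx /= !mul1r mulr1.
rewrite (inj_eq (@face_of_inj _)) (negbTE ne).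
suff -> : (face_of t \subset L) && (face_of r == v |: face_of t) = false by rewrite /= !mul0r.
apply/negbTE/negP => /andP[tL /eqP hr]; case/eqP: ne; apply: face_of_inj.
by rewrite h0 hr setU1K //; apply: contra vL => vt; exact: (subsetP tL).
Qed.

Lemma dim_chains_split (W L : {set T}) k : v \in W -> L \subset W -> v \notin L ->
  (forall A, A \in F k.+1 -> A \subset W -> v \in A -> A :\ v \subset L) ->
  (dim_chains W k.+1 <= dim_chains (W :\ v) k.+1 + dim_chains L k)%N.
Proof.
move=> vW LW vL hL; rewrite /dim_chains {1}supp_mx_split.
apply: leq_trans (mxrank_add _ _) _; rewrite leq_add2l (vertex_mask_factor vW LW vL hL).
by apply: leq_trans (mxrankM_maxl _ _) _; exact: mxrankM_maxr.
Qed.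

Lemma dim_chains0_D1 (W : {set T}) : (dim_chains W 0 <= dim_chains (W :\ v) 0)%N.
Proof.
rewrite /dim_chains supp_mx_split (_ : vertex_mask W 0 = 0) ?addr0 //.
apply/matrixP => i j; rewrite face_diagE mxE.
by move: (face_ofP i); rewrite faces0 => /eqP ->; rewrite inE !andbF.
Qed.

(* On the link [L] of [v], the boundary is conjugate (via coning) to the part of
   the boundary of [W] that lands on faces through [v]. *)
Lemma bd_on_link (W L : {set T}) k : v \in W -> L \subset W -> v \notin L ->
  {in L, forall x, ~~ e v x} ->
  bd_on L k = - (cone_mx L k.+1 *m (bd_on W k.+1 *m vertex_mask W k.+1) *m (cone_mx L k)^T).
Proof.
move=> vW LW vL hL.
have vX (X : {set T}) : X \subset L -> v \notin X by move=> XL; apply: contra vL; apply: subsetP.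
have coneX kk (i : 'I_#|F kk|) : face_of i \subset L ->
    exists r : 'I_#|F kk.+1|, face_of r = v |: face_of i.
  move=> iL; apply: face_of_onto; apply: faces_setU1 (face_ofP i) (vX _ iL) _.
  by move=> x /(subsetP iL) /hL.
have vXW (X : {set T}) : X \subset L -> v |: X \subset W.
  by move=> XL; rewrite subUset sub1set vW (subset_trans XL LW).
apply/matrixP => i j; rewrite bd_onE [RHS]mxE.
case: (boolP (face_of j \subset L)) => hj; last by rewrite mul_tr_cone_mx0 // oppr0 mulr0.
have [r1 h1] := coneX _ j hj; rewrite (mul_tr_cone_mx _ _ _ h1) hj.
case: (boolP (face_of i \subset L)) => hi; last by rewrite mul_cone_mx0 // !mul0r oppr0.
have [r0 h0] := coneX _ i hi; rewrite (mul_cone_mx _ _ _ h0) hi.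
rewrite mul_face_diag_r bd_onE h0 h1 !vXW // setU11 (bd_coef_setU1 _ (vX _ hi) (vX _ hj)) /=.
by rewrite !mulr1n; ring.
Qed.

Lemma rank_bd_split (W L : {set T}) k : v \in W -> L \subset W -> v \notin L ->
  {in L, forall x, ~~ e v x} ->
  (rank_bd (W :\ v) k.+1 + rank_bd L k <= rank_bd W k.+1)%N.
Proof.
move=> vW LW vL hL; set P := supp_mx (W :\ v) k.+2.
set N := bd_on W k.+1; set Q := vertex_mask W k.+1.
have PNQ : P *m N *m Q = 0.
  apply/matrixP => i j; rewrite [RHS]mxE mul_face_diag_r mul_face_diag_l bd_onE.
  case: (boolP (face_of i \subset W :\ v)) => hi; last by rewrite mulr0n !mul0r.
  case: (boolP (v \in face_of j)) => hj; last by rewrite andbF mulr0n mulr0.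
  by rewrite (bd_coef_absent _ (notin_subsetD1 hi) hj) !(mulr0, mul0r).
have hD1 : (rank_bd (W :\ v) k.+1 <= \rank (N :&: kermx Q))%N.
  rewrite /rank_bd (bd_on_restrict _ (subsetDl W [set v])).
  apply: leq_trans (mxrankM_maxl _ _) (mxrankS _).
  by rewrite sub_capmx submxMl sub_kermx PNQ eqxx.
have hL' : (rank_bd L k <= \rank (N *m Q))%N.
  rewrite /rank_bd (bd_on_link k vW LW vL hL) mxrank_opp.
  by apply: leq_trans (mxrankM_maxl _ _) _; exact: mxrankM_maxr.
by rewrite /rank_bd -/N -(mxrank_mul_ker N Q) addnC leq_add.
Qed.

Local Close Scope ring_scope.

Definition closed_nbhd := v |: [set x | e v x].

Lemma link_faces (W : {set T}) k A : A \in F k.+1 -> A \subset W -> v \in A ->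
  A :\ v \subset W :\: closed_nbhd.
Proof.
move=> Ak AW vA; apply/subsetP => x /setD1P[xv xA].
by rewrite !inE (subsetP AW _ xA) negb_or xv (face_indep Ak vA xA).
Qed.

Lemma betti_on_split (W : {set T}) k : v \in W ->
  betti_on W k.+1 <= betti_on (W :\ v) k.+1 + betti_on (W :\: closed_nbhd) k.
Proof.
move=> vW; set L := W :\: closed_nbhd.
have LW : L \subset W by apply: subsetDl.
have vL : v \notin L by rewrite !inE eqxx.
have hL : {in L, forall x, ~~ e v x} by move=> x; rewrite !inE negb_or => /andP[/andP[_ ->]].
have hdim := dim_chains_split vW LW vL (@link_faces W k).
have hrank := rank_bd_split k vW LW vL hL.
have hinto : rank_bd (W :\ v) k + rank_bd_into L k <= rank_bd W k.
  case: k {hdim hrank} => [|k] /=; first by rewrite addn0 rank_bd_subset ?subsetDl.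
  exact: rank_bd_split.
rewrite /betti_on /=; lia.
Qed.

Lemma betti_on0_D1 (W : {set T}) : betti_on W 0 <= betti_on (W :\ v) 0.
Proof.
have := dim_chains0_D1 W; have := rank_bd_subset 0 (subsetDl W [set v]).
rewrite /betti_on /=; lia.
Qed.

Lemma tot_betti_on_split (W : {set T}) : v \in W ->
  tot_betti_on W <= tot_betti_on (W :\ v) + tot_betti_on (W :\: closed_nbhd).
Proof.
move=> vW; rewrite /tot_betti_on [X in X <= _]big_ord_recl [X in _ <= X + _]big_ord_recl.
rewrite [X in _ <= _ + X]big_ord_recr /=.
have hsum : \sum_(i < #|T|) betti_on W (bump 0 i) <=
    \sum_(i < #|T|) betti_on (W :\ v) (bump 0 i) + \sum_(i < #|T|) betti_on (W :\: closed_nbhd) i.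
  by rewrite -big_split /=; apply: leq_sum => i _; exact: betti_on_split.
by apply: leq_trans (leq_add (betti_on0_D1 W) hsum) _; rewrite !addnA leq_addr.
Qed.

Lemma tot_betti_on_cone (W : {set T}) : v \in W -> {in W, forall x, ~~ e v x} ->
  tot_betti_on W = 0.
Proof.
move=> vW hW; rewrite /tot_betti_on big1 // => -[k _] _ /=.
have AW : W :\ v \subset W by apply: subsetDl.
have vA : v \notin W :\ v by rewrite !inE eqxx.
have hA (A : {set T}) : A \subset W -> A :\ v \subset W :\ v by move=> AW'; exact: setSD.
case: k => [|k]; rewrite /betti_on /rank_bd_into /=.
  by have := dim_chains0_D1 W; have := dim_chains_D1_le_rank_bd 0 vW hW; lia.
have := dim_chains_split (k := k) vW AW vA (fun A _ AW' _ => hA A AW').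
have := dim_chains_D1_le_rank_bd k vW hW; have := dim_chains_D1_le_rank_bd k.+1 vW hW; lia.
Qed.

End InducedHomology.

Section NeighbourhoodSplitting.
Variable K : fieldType.
Variable T : finType.
Variable e : rel T.
Hypothesis e_irr : irreflexive e.
Hypothesis e_sym : symmetric e.

Local Notation b W := (tot_betti_on K e W).

Lemma tot_betti_on_split_any u (W : {set T}) :
  b W <= b (W :\ u) + b (W :\: closed_nbhd e u).
Proof.
case: (boolP (u \in W)) => uW; first exact: tot_betti_on_split.
by rewrite (setDidPl _) ?leq_addr // disjoint_sym disjoints1.
Qed.

Lemma tot_betti_on_le_nbhd_sum v (s : seq T) (W : {set T}) : v \in W ->
  {in s, forall u, e v u} -> {in W, forall x, e v x -> x \in s} ->
  b W <= \sum_(0 <= i < size s) b (W :\: ([set x in take i s] :|: closed_nbhd e (nth v s i))).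
Proof.
elim: s W => [|u s IH] W vW hs hW /=.
  rewrite big_nil (tot_betti_on_cone K e_irr e_sym vW) // => x xW.
  by apply/negP => /(hW _ xW).
rewrite big_nat_recl //= (_ : [set x in [::]] :|: _ = closed_nbhd e u); last first.
  by apply/setP => x; rewrite !inE.
apply: leq_trans (tot_betti_on_split_any u W) _; rewrite addnC leq_add2l.
have uv : u != v by apply: contraTneq (hs u (mem_head _ _)) => ->; rewrite e_irr.
apply: leq_trans (IH (W :\ u) _ _ _) _.
- by rewrite !inE eq_sym uv.
- by move=> x xs; apply: hs; rewrite inE xs orbT.
- by move=> x /setD1P[xu xW] ex; move: (hW x xW ex); rewrite inE (negbTE xu).
apply: eq_leq; apply: eq_bigr => i _; congr (b _).
by apply/setP => x; rewrite !inE; case: (x == u); rewrite /= ?andbF.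
Qed.

Definition deg_in (W : {set T}) x := #|[set y in W | e x y]|.

Lemma cardsD_add_leq (W Y Z : {set T}) : Z \subset W :&: Y -> #|W :\: Y| + #|Z| <= #|W|.
Proof.
move=> ZY; rewrite cardsD; have := subset_leq_card ZY.
have := subset_leq_card (subsetIl W Y); lia.
Qed.

Lemma card_setD_nbhd (W X : {set T}) u : u \in W ->
  #|W :\: (X :|: closed_nbhd e u)| + (deg_in W u).+1 <= #|W|.
Proof.
move=> uW; have -> : (deg_in W u).+1 = #|u |: [set y in W | e u y]|.
  by rewrite cardsU1 inE e_irr andbF.
apply: cardsD_add_leq; apply/subsetP => x; rewrite !inE.
by case/orP => [/eqP ->|/andP[-> ->]]; rewrite ?uW ?eqxx ?orbT.
Qed.

Lemma card_setD_nbhd_nonadj (W X : {set T}) u a : u \in W -> a \in W -> a \in X ->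
  a != u -> ~~ e u a ->
  #|W :\: (X :|: closed_nbhd e u)| + (deg_in W u).+2 <= #|W|.
Proof.
move=> uW aW aX au eua.
have -> : (deg_in W u).+2 = #|a |: (u |: [set y in W | e u y])|.
  by rewrite cardsU1 cardsU1 !inE e_irr andbF (negbTE au) (negbTE eua) andbF.
apply: cardsD_add_leq; apply/subsetP => x; rewrite !inE.
case/orP => [/eqP ->|]; first by rewrite aW aX.
by case/orP => [/eqP ->|/andP[-> ->]]; rewrite ?uW ?eqxx ?orbT.
Qed.

End NeighbourhoodSplitting.

From Stdlib Require Import Reals Lra Psatz.

Local Open Scope R_scope.

Definition root4_3 : R := Rpower 3 (/ 4).

Local Notation c := root4_3.

Lemma root4_3_gt0 : 0 < c.
Proof. exact: exp_pos. Qed.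

Lemma root4_3_pow4 : c ^ 4 = 3.
Proof.
rewrite -Rpower_pow; last exact: root4_3_gt0.
rewrite /root4_3 Rpower_mult (_ : / 4 * INR 4 = 1) ?Rpower_1 //; first lra.
by rewrite (_ : INR 4 = 4); [field | rewrite /=; lra].
Qed.

Lemma root4_3_gt : 13 / 10 < c.
Proof.
case: (Rlt_or_le (13 / 10) c) => // h; exfalso.
have : c ^ 4 <= (13 / 10) ^ 4 by apply: pow_incr; have := root4_3_gt0; lra.
by rewrite root4_3_pow4 /=; lra.
Qed.

Lemma pow_root4_3_le m n : (m <= n)%nat -> c ^ m <= c ^ n.
Proof. by move/leP => h; apply: Rle_pow => //; have := root4_3_gt; lra. Qed.

Lemma pow_root4_3_gt0 p : 0 < c ^ p.
Proof. by apply: pow_lt; exact: root4_3_gt0. Qed.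

(* The tightest of the three recursions: it needs [3 c^2 - 3 c - 1 > 0]. *)
Lemma root4_3_rec_deg_ge5 p : c ^ (p + 5) + c ^ p <= c ^ (p + 6).
Proof.
rewrite !pow_add; have h4 := root4_3_pow4; have hg := root4_3_gt.
have hp := pow_root4_3_gt0 p.
have -> : c ^ 5 = 3 * c by rewrite -h4 /=; ring.
have -> : c ^ 6 = 3 * c * c by rewrite -h4 /=; ring.
have : 3 * c * c - 3 * c - 1 > 0 by nra.
set q := c ^ p in hp *; nra.
Qed.

Lemma root4_3_rec_deg4 p : 3 * c ^ (p + 1) + c ^ p <= c ^ (p + 6).
Proof.
have := root4_3_rec_deg_ge5 p; rewrite !pow_add.
have -> : c ^ 5 = 3 * c by rewrite -root4_3_pow4 /=; ring.
by rewrite /=; lra.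
Qed.

Lemma root4_3_rec_deg_le3 d p : (d <= 3)%nat -> INR d * c ^ p <= c ^ (p + d.+1).
Proof.
move=> hd; rewrite pow_add; have h4 := root4_3_pow4; have hg := root4_3_gt.
have hp := pow_root4_3_gt0 p.
suff : INR d <= c ^ d.+1 by nra.
by case: d hd => [|[|[|[|d]]]] // _; rewrite /=; nra.
Qed.

Lemma le_INR_leq m n : (m <= n)%nat -> INR m <= INR n.
Proof. by move/leP; exact: le_INR. Qed.

Lemma INR_addn m n : INR (m + n)%nat = INR m + INR n.
Proof. exact: plus_INR. Qed.

Lemma INR_sum_nat_le k (f : nat -> nat) (B : R) :
  (forall i, (i < k)%nat -> INR (f i) <= B) -> INR (\sum_(0 <= i < k) f i) <= INR k * B.
Proof.
elim: k => [|k IH] hf; first by rewrite big_nil /=; lra.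
rewrite big_nat_recr // plus_INR S_INR Rmult_plus_distr_r Rmult_1_l.
apply: Rplus_le_compat (hf k (ltnSn k)).
exact: IH (fun i hi => hf i (ltnW hi)).
Qed.

Section BettiBound.
Variable K : fieldType.
Variable T : finType.
Variable e : rel T.
Hypothesis e_irr : irreflexive e.
Hypothesis e_sym : symmetric e.
Hypothesis e_K5 : K5_free e.

Local Notation b W := (tot_betti_on K e W).

Lemma K5_free_nbhd4 v (S : {set T}) : v \notin S -> #|S| = 4%nat -> {in S, forall y, e v y} ->
  exists a1 a2, [/\ a1 \in S, a2 \in S, a1 != a2 & ~~ e a1 a2].
Proof.
move=> vS cS hS.
case: (boolP [exists a1 in S, exists a2 in S, (a1 != a2) && ~~ e a1 a2]).
  by case/exists_inP => a1 a1S /exists_inP[a2 a2S /andP[? ?]]; exists a1, a2.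
move=> hn; have c5 : #|v |: S| = 5%nat by rewrite cardsU1 vS cS.
exfalso; apply: (e_K5 c5) => x y; rewrite !in_setU1 => /orP[/eqP->|xS] /orP[/eqP->|yS] xy.
- by rewrite eqxx in xy.
- exact: hS.
- by rewrite e_sym hS.
- apply/negPn; apply: contra hn => nxy; apply/exists_inP; exists x => //.
  by apply/exists_inP; exists y; rewrite ?xy.
Qed.

Section InductionStep.
Variable W : {set T}.
Hypothesis IH : forall W' : {set T}, (#|W'| < #|W|)%nat -> INR (b W') <= c ^ #|W'|.

Local Notation n := #|W|.

Lemma tot_betti_on_le_pow_smaller (X : {set T}) j : (#|X| + j <= n)%nat -> (0 < j)%nat ->
  INR (b X) <= c ^ (n - j).
Proof. by move=> hX hj; apply: Rle_trans (IH _) (pow_root4_3_le _); lia. Qed.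

Variable v : T.
Hypothesis vW : v \in W.

Local Notation d := (deg_in e W v).

Lemma card_nbhd_v : (#|W :\: closed_nbhd e v| + d.+1 <= n)%nat.
Proof. by have := card_setD_nbhd e_irr set0 vW; rewrite set0U. Qed.

Lemma tot_betti_on_le_pow_deg_ge5 : (5 <= d)%nat -> INR (b W) <= c ^ n.
Proof.
move=> hd; have hcard := card_nbhd_v.
apply: Rle_trans (le_INR_leq (tot_betti_on_split K e_irr e_sym vW)) _.
have hv : INR (b (W :\ v)) <= c ^ (n - 1).
  by apply: tot_betti_on_le_pow_smaller => //; have := cardsD1 v W; rewrite vW => ?; lia.
have hN : INR (b (W :\: closed_nbhd e v)) <= c ^ (n - 6).
  by apply: tot_betti_on_le_pow_smaller => //; lia.
have := root4_3_rec_deg_ge5 (n - 6); rewrite INR_addn subnK; last by lia.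
by rewrite (_ : (n - 6 + 5 = n - 1)%nat); [lra | lia].
Qed.

Hypothesis v_min : forall x, x \in W -> (d <= deg_in e W x)%nat.

Lemma card_nbhd_term (s : seq T) i : (i < size s)%nat -> {subset s <= W} ->
  (#|W :\: ([set x in take i s] :|: closed_nbhd e (nth v s i))| + d.+1 <= n)%nat.
Proof.
move=> hi sW; have uW := sW _ (mem_nth v hi).
apply: leq_trans _ (card_setD_nbhd e_irr [set x in take i s] uW).
by rewrite leq_add2l ltnS v_min.
Qed.

Lemma tot_betti_on_le_pow_mindeg_le3 : (d <= 3)%nat -> INR (b W) <= c ^ n.
Proof.
move=> hd; set S := [set y in W | e v y].
have Sv : {in enum S, forall u, e v u} by move=> u; rewrite mem_enum inE => /andP[].
have SW : {subset enum S <= W} by move=> u; rewrite mem_enum inE => /andP[].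
have hS : {in W, forall x, e v x -> x \in enum S} by move=> x xW ex; rewrite mem_enum inE xW.
apply: Rle_trans (le_INR_leq (tot_betti_on_le_nbhd_sum K e_irr e_sym vW Sv hS)) _.
apply: Rle_trans (INR_sum_nat_le (B := c ^ (n - d.+1)) _) _.
  by move=> i hi; apply: tot_betti_on_le_pow_smaller (card_nbhd_term hi SW) _.
have hcard := card_nbhd_v; rewrite -cardE.
by have := root4_3_rec_deg_le3 (n - d.+1) hd; rewrite subnK //; lia.
Qed.

Lemma tot_betti_on_le_pow_mindeg4 : d = 4%nat -> INR (b W) <= c ^ n.
Proof.
move=> d4; set S := [set y in W | e v y].
have vS : v \notin S by rewrite inE e_irr andbF.
have Sv : {in S, forall y, e v y} by move=> y; rewrite inE => /andP[].
have SW : {subset S <= W} by move=> y; rewrite inE => /andP[].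
have [a1 [a2 [a1S a2S a12 na12]]] := K5_free_nbhd4 vS d4 Sv.
set l := a1 :: enum (S :\ a1 :\ a2); set s := rcons l a2.
have size_l : size l = 3%nat.
  have a2S1 : a2 \in S :\ a1 by rewrite in_setD1 eq_sym a12 a2S.
  have cS : #|S| = 4%nat by [].
  have := cardsD1 a1 S; have := cardsD1 a2 (S :\ a1).
  by rewrite /= -cardE a1S a2S1 => ? ?; lia.
have sS : {subset s <= S}.
  move=> u; rewrite mem_rcons !in_cons mem_enum => /or3P[/eqP->|/eqP->|] //.
  by rewrite !inE => /and3P[].
have hs : {in W, forall x, e v x -> x \in s}.
  move=> x xW ex; rewrite mem_rcons !in_cons mem_enum !inE xW ex andbT.
  by case: (x == a2); case: (x == a1).
have hsum := tot_betti_on_le_nbhd_sum K e_irr e_sym vW (fun u us => Sv u (sS u us)) hs.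
apply: Rle_trans (le_INR_leq hsum) _.
have take_l : take (size l) s = l by rewrite /s -cats1 take_size_cat.
have nth_l : nth v s (size l) = a2 by rewrite /s nth_rcons ltnn eqxx.
rewrite size_rcons big_nat_recr // INR_addn take_l nth_l.
have hlast : (#|W :\: ([set x in l] :|: closed_nbhd e a2)| + 6 <= n)%nat.
  have a1l : a1 \in [set x in l] by rewrite inE mem_head.
  have na21 : ~~ e a2 a1 by rewrite e_sym.
  have := card_setD_nbhd_nonadj e_irr (SW _ a2S) (SW _ a1S) a1l a12 na21.
  by have := v_min (SW _ a2S) => ? ?; lia.
have hfirst i : (i < size l)%nat ->
    INR (b (W :\: ([set x in take i s] :|: closed_nbhd e (nth v s i)))) <= c ^ (n - 5).
  move=> hi; apply: (tot_betti_on_le_pow_smaller (j := 5)) => //.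
  have his : (i < size s)%nat by rewrite size_rcons ltnS ltnW.
  by have := card_nbhd_term his (fun u us => SW u (sS u us)); rewrite d4.
have hlast' := tot_betti_on_le_pow_smaller hlast isT.
apply: Rle_trans (Rplus_le_compat _ _ _ _ (INR_sum_nat_le hfirst) hlast') _.
have hn : (6 <= n)%nat by move: hlast => ?; lia.
have := root4_3_rec_deg4 (n - 6); rewrite subnK // size_l (_ : (n - 6 + 1 = n - 5)%nat).
  by rewrite /=; lra.
by lia.
Qed.

End InductionStep.

Lemma tot_betti_on_le_pow (W : {set T}) : INR (b W) <= c ^ #|W|.
Proof.
have [m] := ubnP #|W|; elim: m W => // m IHm W /ltnSE hW.
case: (set_0Vmem W) => [->|[x0 x0W]].
  by rewrite cards0 /=; have := le_INR_leq (tot_betti_on_set0 K e); rewrite /=.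
have IH (W' : {set T}) : (#|W'| < #|W|)%nat -> INR (b W') <= c ^ #|W'|.
  by move=> hW'; apply: IHm; apply: leq_trans hW' hW.
have [v vW v_min] := arg_minnP (deg_in e W) x0W.
case: (leqP 5 (deg_in e W v)) => [hd|hd].
  exact: (tot_betti_on_le_pow_deg_ge5 IH vW hd).
case: (leqP (deg_in e W v) 3) => [hd3|hd3].
  exact: (tot_betti_on_le_pow_mindeg_le3 IH vW v_min hd3).
by apply: (tot_betti_on_le_pow_mindeg4 IH vW v_min); apply/eqP; rewrite eqn_leq -ltnS hd hd3.
Qed.

End BettiBound.

Local Close Scope R_scope.

Theorem proposition6p1 (K : fieldType) (T : finType) (e : rel T) (n : nat) :
  simple_graph e -> (#|T| <= n)%N -> K5_free e ->
  (INR (tot_betti e K) <= Rpower 3 (INR n / 4))%R.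
Proof.
case=> e_irr e_sym hn e_K5; rewrite -tot_betti_on_setT.
apply: Rle_trans (tot_betti_on_le_pow K e_irr e_sym e_K5 setT) _.
rewrite cardsT; apply: Rle_trans (pow_root4_3_le hn) _.
rewrite -Rpower_pow; last exact: root4_3_gt0.
by rewrite /root4_3 Rpower_mult; apply: Req_le; congr Rpower; rewrite /Rdiv; ring.
Qed.
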